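(* Let $\{\vec L_n\}_{n=1}^6$ be an oriented right-angled hexagon in $\mathbb H^3$ (indices modulo $6$), and for each $n$ let $\delta_n\in\mathbb C/2\pi i\mathbb Z$ be one of the two complex half side-lengths along $\vec L_n$. Then there exists $\varepsilon\in\{1,-1\}$ (depending on the choices of the $\delta_n$) such that \begin{align*} \cosh(\delta_1+\delta_3)\cosh\delta_2&=\varepsilon\cosh(\delta_4+\delta_6)\cosh\delta_5,\\ -\sinh(\delta_1+\delta_3)\cosh\delta_2&=\varepsilon\cosh(\delta_4-\delta_6)\sinh\delta_5,\\ -\cosh(\delta_1-\delta_3)\sinh\delta_2&=\varepsilon\sinh(\delta_4+\delta_6)\cosh\delta_5,\\ \sinh(\delta_1-\delta_3)\sinh\delta_2&=\varepsilon\sinh(\delta_4-\delta_6)\sinh\delta_5. \end{align*}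
   Context: Use the upper half-space model of $\mathbb H^3$ with boundary $\mathbb C\cup\{\infty\}$; $\vec L_{[u,v]}$ denotes the geodesic with endpoints $u,v$ oriented from $u$ to $v$. An oriented right-angled hexagon in $\mathbb H^3$ is a cyclic six-tuple of oriented complete geodesics $\vec L_1,\dots,\vec L_6$ such that $L_n$ and $L_{n+1}$ intersect perpendicularly for each $n$ modulo 6. Complex side-length along $\vec L_n$: let $\eta$ be the unique orientation-preserving isometry with $\eta(\vec L_n)=\vec L_{[0,\infty]}$ and $\eta(\vec L_{n-1})=\vec L_{[-1,1]}$; then $\eta(\vec L_{n+1})=\vec L_{[-z,z]}$ for some $z\in\mathbb C\setminus\{0\}$ and $\sigma_n=\log z\in\mathbb C/2\pi i\mathbb Z$. The two complex half side-lengths along $\vec L_n$ are the two elements $\delta\in\mathbb C/2\pi i\mathbb Z$ with $2\delta=\sigma_n$ (they differ by $\pi i$). *)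

From Stdlib Require Import Reals.
From Coquelicot Require Export Coquelicot.

Definition Cexp (z : C) : C :=
  (exp (Re z) * cos (Im z), exp (Re z) * sin (Im z))%R.
Definition Ccosh (z : C) : C := ((Cexp z + Cexp (- z)) / RtoC 2)%C.
Definition Csinh (z : C) : C := ((Cexp z - Cexp (- z)) / RtoC 2)%C.

(* Boundary of H^3 in the upper half-space model: C ∪ {∞};
   [Some w] is the point w of C, [None] is ∞. *)
Definition bdry := option C.
Definition infty : bdry := None.

(* Orientation-preserving isometries of H^3 = Moebius transformations
   w |-> (a w + b)/(c w + d), ad - bc <> 0, acting on the boundary;
   the isometry of H^3 is determined by (and identified with) this action. *)
Record moebius := Moeb { ma : C; mb : C; mc : C; md : C;
                         mdet : (ma * md - mb * mc)%C <> RtoC 0 }.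

Definition mact (g : moebius) (p : bdry) : bdry :=
  match p with
  | Some w => if Ceq_dec (mc g * w + md g)%C (RtoC 0) then None
              else Some ((ma g * w + mb g) / (mc g * w + md g))%C
  | None => if Ceq_dec (mc g) (RtoC 0) then None
            else Some (ma g / mc g)%C
  end.

(* Oriented complete geodesic L_[u,v]: ordered pair of distinct boundary
   points, oriented from u to v. *)
Record ogeod := OG { gstart : bdry; gend : bdry; gdist : gstart <> gend }.

Definition maps_to (g : moebius) (L : ogeod) (u v : bdry) : Prop :=
  mact g (gstart L) = u /\ mact g (gend L) = v.

(* L and L' (unoriented) intersect perpendicularly: some isometry sends L
   to the geodesic with endpoints {0, ∞} and L' to the geodesic with
   endpoints {-1, 1} (which intersect perpendicularly at the point (0,1)). *)
Definition perp (L L' : ogeod) : Prop :=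
  exists g : moebius,
    ((maps_to g L (Some (RtoC 0)) infty \/ maps_to g L infty (Some (RtoC 0))) /\
     (maps_to g L' (Some (RtoC (-1))) (Some (RtoC 1)) \/
      maps_to g L' (Some (RtoC 1)) (Some (RtoC (-1))))).

Definition ra_hexagon (L1 L2 L3 L4 L5 L6 : ogeod) : Prop :=
  perp L1 L2 /\ perp L2 L3 /\ perp L3 L4 /\ perp L4 L5 /\
  perp L5 L6 /\ perp L6 L1.

(* delta (a representative in C of a class in C/2πiZ) is a complex half
   side-length along L (with predecessor Lp and successor Ls): for the
   (unique) orientation-preserving isometry eta with eta(L) = L_[0,∞] and
   eta(Lp) = L_[-1,1], one has eta(Ls) = L_[-z,z] and sigma = log z;
   2 delta = sigma in C/2πiZ, i.e. exp(2 delta) = z. *)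
Definition half_side_length (Lp L Ls : ogeod) (delta : C) : Prop :=
  exists (eta : moebius) (z : C),
    maps_to eta L (Some (RtoC 0)) infty /\
    maps_to eta Lp (Some (RtoC (-1))) (Some (RtoC 1)) /\
    maps_to eta Ls (Some (- z)%C) (Some z) /\
    Cexp (RtoC 2 * delta)%C = z.

(* Normalise each side L_n by the isometry eta_n from the definition of its
   half side-length delta_n.  As eta_(n+1) o eta_n^-1 is pinned down by three
   boundary points, the matrix of eta_(n+1) is, up to a scalar,
   U(e^delta_n) times that of eta_n, where U(x) = [[1/x, x], [1/x, -x]].
   Going once around the hexagon, U6 U5 U4 . U3 U2 U1 is a scalar matrix; as
   both triple products have determinant -8, U3 U2 U1 is +-(adjugate of
   U6 U5 U4).  The entries of U3 U2 U1 are linear combinations of the four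
   hyperbolic products of the statement, and comparing entries gives the
   four identities. *)
From Stdlib Require Import Reals Lra.
From Coquelicot Require Import Coquelicot.
Open Scope C_scope.

Lemma Csqr_eq1 (s : C) : s * s = 1 -> s = 1 \/ s = -1.
Proof.
  intro E; destruct (Ceq_dec s 1) as [|Hs]; [now left | right].
  assert (Hs1 : s - 1 <> 0).
  { intro F; apply Hs; transitivity (s - 1 + 1); [ring | rewrite F; ring]. }
  transitivity ((s * s - 1) / (s - 1) - 1); [field; exact Hs1 | rewrite E; field; exact Hs1].
Qed.

Lemma Cexp_add (a b : C) : Cexp (a + b) = Cexp a * Cexp b.
Proof.
  destruct a as [a1 a2], b as [b1 b2]; unfold Cexp, Cmult, Cplus; simpl.
  rewrite exp_plus, cos_plus, sin_plus; f_equal; ring.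
Qed.

Lemma Cexp_0 : Cexp 0 = 1.
Proof. unfold Cexp, RtoC; simpl; rewrite exp_0, cos_0, sin_0; f_equal; ring. Qed.

Lemma Cexp_mul_opp (a : C) : Cexp a * Cexp (- a) = 1.
Proof. rewrite <- Cexp_add, Cplus_opp_r; exact Cexp_0. Qed.

Lemma Cexp_neq0 (a : C) : Cexp a <> 0.
Proof.
  intro E; pose proof (Cexp_mul_opp a) as H; rewrite E, Cmult_0_l in H.
  injection H; lra.
Qed.

Lemma Cexp_opp (a : C) : Cexp (- a) = / Cexp a.
Proof.
  rewrite <- (Cmult_1_l (/ Cexp a)), <- (Cexp_mul_opp a).
  field; apply Cexp_neq0.
Qed.

Lemma Cexp_sub (a b : C) : Cexp (a - b) = Cexp a / Cexp b.
Proof. unfold Cminus; rewrite Cexp_add, Cexp_opp; reflexivity. Qed.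

Lemma Cexp_double (a : C) : Cexp (RtoC 2 * a) = Cexp a * Cexp a.
Proof. rewrite <- Cexp_add; f_equal; ring. Qed.

Lemma Ccosh_Cexp (z : C) : Ccosh z = (Cexp z + / Cexp z) / 2.
Proof. unfold Ccosh; rewrite Cexp_opp; reflexivity. Qed.

Lemma Csinh_Cexp (z : C) : Csinh z = (Cexp z - / Cexp z) / 2.
Proof. unfold Csinh; rewrite Cexp_opp; reflexivity. Qed.

Record mat := Mat { e11 : C; e12 : C; e21 : C; e22 : C }.

Definition mmul (A B : mat) : mat :=
  Mat (e11 A * e11 B + e12 A * e21 B) (e11 A * e12 B + e12 A * e22 B)
      (e21 A * e11 B + e22 A * e21 B) (e21 A * e12 B + e22 A * e22 B).
Definition smul (k : C) (A : mat) : mat :=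
  Mat (k * e11 A) (k * e12 A) (k * e21 A) (k * e22 A).
Definition Id : mat := Mat 1 0 0 1.
Definition det (A : mat) : C := e11 A * e22 A - e12 A * e21 A.
Definition adj (A : mat) : mat := Mat (e22 A) (- e12 A) (- e21 A) (e11 A).

Lemma mat_ext (A B : mat) :
  e11 A = e11 B -> e12 A = e12 B -> e21 A = e21 B -> e22 A = e22 B -> A = B.
Proof. destruct A, B; simpl; intros; subst; reflexivity. Qed.

Lemma mmul_assoc (A B M : mat) : mmul (mmul A B) M = mmul A (mmul B M).
Proof. apply mat_ext; simpl; ring. Qed.

Lemma mmul_smul_l (k : C) (A B : mat) : mmul (smul k A) B = smul k (mmul A B).
Proof. apply mat_ext; simpl; ring. Qed.

Lemma mmul_smul_r (k : C) (A B : mat) : mmul A (smul k B) = smul k (mmul A B).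
Proof. apply mat_ext; simpl; ring. Qed.

Lemma smul_smul (a b : C) (A : mat) : smul a (smul b A) = smul (a * b) A.
Proof. apply mat_ext; simpl; ring. Qed.

Lemma mmul_1l (A : mat) : mmul Id A = A.
Proof. apply mat_ext; simpl; ring. Qed.

Lemma mmul_1r (A : mat) : mmul A Id = A.
Proof. apply mat_ext; simpl; ring. Qed.

Lemma smul_inj (k : C) (A B : mat) : k <> 0 -> smul k A = smul k B -> A = B.
Proof.
  intros Hk E.
  rewrite <- (mmul_1l A), <- (mmul_1l B).
  replace Id with (smul (/ k) (smul k Id)) by (apply mat_ext; simpl; field; exact Hk).
  rewrite !mmul_smul_l, !mmul_1l, E; reflexivity.
Qed.

Lemma det_mmul (A B : mat) : det (mmul A B) = det A * det B.
Proof. unfold det; simpl; ring. Qed.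

Lemma det_smul (k : C) (A : mat) : det (smul k A) = k * k * det A.
Proof. unfold det; simpl; ring. Qed.

Lemma mmul_adj_l (A : mat) : mmul (adj A) A = smul (det A) Id.
Proof. apply mat_ext; unfold det; simpl; ring. Qed.

Lemma mmul_adj_r (A : mat) : mmul A (adj A) = smul (det A) Id.
Proof. apply mat_ext; unfold det; simpl; ring. Qed.

Lemma mmulIr (M A B : mat) : det M <> 0 -> mmul A M = mmul B M -> A = B.
Proof.
  intros HM E.
  apply (smul_inj (det M)); [exact HM |].
  rewrite <- (mmul_1r A), <- (mmul_1r B), <- !mmul_smul_r, <- mmul_adj_r,
    <- !mmul_assoc, E; reflexivity.
Qed.

(* Multiplying by adj W on the left gives (K det W) B = adj W; taking
   determinants shows that K det W is a sign. *)
Lemma scalar_inverse_adj (W B : mat) (K : C) :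
  det W = det B -> smul K (mmul W B) = Id ->
  (K * det W = 1 \/ K * det W = -1) /\ B = smul (K * det W) (adj W).
Proof.
  intros Hdet E.
  assert (Hs : (K * det W) * (K * det W) = 1).
  { transitivity (det (smul K (mmul W B))).
    - rewrite det_smul, det_mmul, <- Hdet; ring.
    - rewrite E; unfold det; simpl; ring. }
  assert (HB : smul (K * det W) B = adj W).
  { rewrite <- (mmul_1r (adj W)), <- E, mmul_smul_r, <- mmul_assoc, mmul_adj_l,
      mmul_smul_l, mmul_1l, smul_smul, (Cmult_comm K); reflexivity. }
  split; [apply Csqr_eq1; exact Hs |].
  rewrite <- HB, smul_smul, Hs.
  apply mat_ext; simpl; ring.
Qed.

Definition gm (g : moebius) : mat := Mat (ma g) (mb g) (mc g) (md g).

Definition mvec (A : mat) (v : C * C) : C * C :=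
  (e11 A * fst v + e12 A * snd v, e21 A * fst v + e22 A * snd v).

Definition vdet (v w : C * C) : C := fst v * snd w - snd v * fst w.

Definition hom (p : bdry) : C * C :=
  match p with Some w => (w, RtoC 1) | None => (RtoC 1, RtoC 0) end.

Lemma vdet_hom_neq0 (p q : bdry) : p <> q -> vdet (hom p) (hom q) <> 0.
Proof.
  destruct p as [w|], q as [w'|]; unfold vdet; simpl; intros Hpq E.
  - apply Hpq; f_equal; transitivity (w * 1 - 1 * w' + w'); [ring | rewrite E; ring].
  - replace (w * 0 - 1 * 1) with (RtoC (-1)) in E by ring; injection E; lra.
  - replace (1 * 1 - 0 * w') with (RtoC 1) in E by ring; injection E; lra.
  - apply Hpq; reflexivity.
Qed.

Lemma mact_hom (g : moebius) (p : bdry) :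
  exists l : C, l <> 0 /\ mvec (gm g) (hom p) = (l * fst (hom (mact g p)), l * snd (hom (mact g p))).
Proof.
  destruct g as [a b c d Hdet]; unfold mvec; simpl.
  destruct p as [w|]; simpl.
  - destruct (Ceq_dec (c * w + d) 0) as [E|E]; simpl.
    + exists (a * w + b); split.
      * intro F; apply Hdet.
        transitivity (a * (c * w + d) - c * (a * w + b)); [ring | rewrite E, F; ring].
      * f_equal; [ring |]; transitivity (c * w + d); [ring | rewrite E; ring].
    + exists (c * w + d); split; [exact E | f_equal; [field; exact E | ring]].
  - destruct (Ceq_dec c 0) as [E|E]; simpl.
    + exists a; split.
      * intro F; apply Hdet; rewrite E, F; ring.
      * rewrite E; f_equal; ring.
    + exists c; split; [exact E | f_equal; [field; exact E | ring]].
Qed.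

Lemma mvec_mmul (A B : mat) (v : C * C) : mvec (mmul A B) v = mvec A (mvec B v).
Proof. unfold mvec; simpl; f_equal; ring. Qed.

Lemma mvec_smul (k : C) (A : mat) (v : C * C) :
  mvec (smul k A) v = (k * fst (mvec A v), k * snd (mvec A v)).
Proof. unfold mvec; simpl; f_equal; ring. Qed.

Lemma linear_form_eq (x y x' y' : C) (v w : C * C) : vdet v w <> 0 ->
  x * fst v + y * snd v = x' * fst v + y' * snd v ->
  x * fst w + y * snd w = x' * fst w + y' * snd w -> x = x' /\ y = y'.
Proof.
  destruct v as [v1 v2], w as [w1 w2]; unfold vdet; simpl; intros D Ev Ew; split.
  - transitivity (((x * v1 + y * v2) * w2 - (x * w1 + y * w2) * v2) / (v1 * w2 - v2 * w1));
      [field; exact D | rewrite Ev, Ew; field; exact D].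
  - transitivity (((x * w1 + y * w2) * v1 - (x * v1 + y * v2) * w1) / (v1 * w2 - v2 * w1));
      [field; exact D | rewrite Ev, Ew; field; exact D].
Qed.

Lemma mat_row1_eq (M N : mat) (v w : C * C) : vdet v w <> 0 ->
  fst (mvec M v) = fst (mvec N v) -> fst (mvec M w) = fst (mvec N w) ->
  e11 M = e11 N /\ e12 M = e12 N.
Proof. exact (linear_form_eq _ _ _ _ v w). Qed.

Lemma mat_row2_eq (M N : mat) (v w : C * C) : vdet v w <> 0 ->
  snd (mvec M v) = snd (mvec N v) -> snd (mvec M w) = snd (mvec N w) ->
  e21 M = e21 N /\ e22 M = e22 N.
Proof. exact (linear_form_eq _ _ _ _ v w). Qed.

(* [side_mx x] is 1/x times the matrix of w |-> (w + x^2) / (w - x^2), which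
   sends -x^2, x^2, 0, ∞ to 0, ∞, -1, 1. *)
Definition side_mx (x : C) : mat := Mat (/ x) x (/ x) (- x).

Lemma eta_transition (g h : moebius) (L Ls : ogeod) (d : C) :
  maps_to g L (Some (RtoC 0)) infty ->
  maps_to g Ls (Some (- Cexp (RtoC 2 * d))) (Some (Cexp (RtoC 2 * d))) ->
  maps_to h Ls (Some (RtoC 0)) infty ->
  maps_to h L (Some (RtoC (-1))) (Some (RtoC 1)) ->
  exists k : C, gm h = smul k (mmul (side_mx (Cexp d)) (gm g)).
Proof.
  intros [Gt _] [Gs Ge] [Hs He] [Ht _].
  rewrite Cexp_double in Gs, Ge.
  set (x := Cexp d) in *.
  set (s := gstart Ls) in *; set (e := gend Ls) in *; set (t := gstart L) in *.
  assert (Hx : x <> 0) by apply Cexp_neq0.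
  assert (Dst : vdet (hom s) (hom t) <> 0).
  { apply vdet_hom_neq0; intro E; rewrite E, Ht in Hs; injection Hs; lra. }
  assert (Det : vdet (hom e) (hom t) <> 0).
  { apply vdet_hom_neq0; intro E; rewrite E, Ht in He; discriminate. }
  destruct (mact_hom g s) as [a1 [_ Gs']]; rewrite Gs in Gs'.
  destruct (mact_hom g e) as [a2 [_ Ge']]; rewrite Ge in Ge'.
  destruct (mact_hom g t) as [a3 [Ha3 Gt']]; rewrite Gt in Gt'.
  destruct (mact_hom h s) as [b1 [_ Hs']]; rewrite Hs in Hs'.
  destruct (mact_hom h e) as [b2 [_ He']]; rewrite He in He'.
  destruct (mact_hom h t) as [b3 [_ Ht']]; rewrite Ht in Ht'.
  (* Both matrices send hom s to a multiple of [0 : 1] and hom e to a multiple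
     of [1 : 0]; the scalar is then fixed by hom t. *)
  set (k := - b3 / (x * a3)); exists k.
  destruct (mat_row1_eq (gm h) (smul k (mmul (side_mx x) (gm g))) (hom s) (hom t) Dst)
    as [R11 R12];
    [ rewrite mvec_smul, mvec_mmul, Hs', Gs'; simpl; field; auto
    | rewrite mvec_smul, mvec_mmul, Ht', Gt'; unfold k; simpl; field; auto | ].
  destruct (mat_row2_eq (gm h) (smul k (mmul (side_mx x) (gm g))) (hom e) (hom t) Det)
    as [R21 R22];
    [ rewrite mvec_smul, mvec_mmul, He', Ge'; simpl; field; auto
    | rewrite mvec_smul, mvec_mmul, Ht', Gt'; unfold k; simpl; field; auto | ].
  apply mat_ext; assumption.
Qed.

Definition half_hexagon_mx (a b c : C) : mat :=
  mmul (side_mx (Cexp c)) (mmul (side_mx (Cexp b)) (side_mx (Cexp a))).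

Lemma det_half_hexagon_mx (a b c : C) : det (half_hexagon_mx a b c) = - RtoC 8.
Proof.
  pose proof (Cexp_neq0 a); pose proof (Cexp_neq0 b); pose proof (Cexp_neq0 c).
  unfold half_hexagon_mx, det; simpl; field; auto.
Qed.

Ltac entries_field :=
  unfold half_hexagon_mx; simpl; field;
  repeat split; try apply Cexp_neq0;
  let E := fresh in intro E; injection E; lra.

Lemma cosh_sum_cosh_entries (a b c : C) (B := half_hexagon_mx a b c) :
  Ccosh (a + c) * Ccosh b = (e11 B + e21 B + e12 B - e22 B) / 8.
Proof. rewrite !Ccosh_Cexp, Cexp_add; entries_field. Qed.

Lemma sinh_sum_cosh_entries (a b c : C) (B := half_hexagon_mx a b c) :
  Csinh (a + c) * Ccosh b = (e12 B - e22 B - e11 B - e21 B) / 8.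
Proof. rewrite Csinh_Cexp, !Ccosh_Cexp, Cexp_add; entries_field. Qed.

Lemma cosh_diff_sinh_entries (a b c : C) (B := half_hexagon_mx a b c) :
  Ccosh (a - c) * Csinh b = (e21 B - e11 B - e12 B - e22 B) / 8.
Proof. rewrite Csinh_Cexp, !Ccosh_Cexp, Cexp_sub; entries_field. Qed.

Lemma sinh_diff_sinh_entries (a b c : C) (B := half_hexagon_mx a b c) :
  Csinh (a - c) * Csinh b = (e11 B - e12 B - e21 B - e22 B) / 8.
Proof. rewrite !Csinh_Cexp, Cexp_sub; entries_field. Qed.

Lemma half_hexagon_relations (d1 d2 d3 d4 d5 d6 s : C) :
  half_hexagon_mx d1 d2 d3 = smul s (adj (half_hexagon_mx d4 d5 d6)) ->
    (Ccosh (d1 + d3) * Ccosh d2 = - s * (Ccosh (d4 + d6) * Ccosh d5)) /\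
    (- (Csinh (d1 + d3) * Ccosh d2) = - s * (Ccosh (d4 - d6) * Csinh d5)) /\
    (- (Ccosh (d1 - d3) * Csinh d2) = - s * (Csinh (d4 + d6) * Ccosh d5)) /\
    (Csinh (d1 - d3) * Csinh d2 = - s * (Csinh (d4 - d6) * Csinh d5)).
Proof.
  intro E.
  rewrite !cosh_sum_cosh_entries, !sinh_sum_cosh_entries, !cosh_diff_sinh_entries,
    !sinh_diff_sinh_entries, E.
  set (W := half_hexagon_mx d4 d5 d6); cbn [e11 e12 e21 e22 smul adj].
  repeat split; field; let F := fresh in intro F; injection F; lra.
Qed.

Theorem theorem7p9 (L1 L2 L3 L4 L5 L6 : ogeod) (d1 d2 d3 d4 d5 d6 : C) :
  ra_hexagon L1 L2 L3 L4 L5 L6 ->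
  half_side_length L6 L1 L2 d1 ->
  half_side_length L1 L2 L3 d2 ->
  half_side_length L2 L3 L4 d3 ->
  half_side_length L3 L4 L5 d4 ->
  half_side_length L4 L5 L6 d5 ->
  half_side_length L5 L6 L1 d6 ->
  exists eps : C, (eps = RtoC 1 \/ eps = RtoC (-1)) /\
    (Ccosh (d1 + d3) * Ccosh d2 = eps * (Ccosh (d4 + d6) * Ccosh d5))%C /\
    (- (Csinh (d1 + d3) * Ccosh d2) = eps * (Ccosh (d4 - d6) * Csinh d5))%C /\
    (- (Ccosh (d1 - d3) * Csinh d2) = eps * (Csinh (d4 + d6) * Ccosh d5))%C /\
    (Csinh (d1 - d3) * Csinh d2 = eps * (Csinh (d4 - d6) * Csinh d5))%C.
Proof.
  intros _ [g1 [z1 [M1 [P1 [S1 <-]]]]] [g2 [z2 [M2 [P2 [S2 <-]]]]]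
    [g3 [z3 [M3 [P3 [S3 <-]]]]] [g4 [z4 [M4 [P4 [S4 <-]]]]]
    [g5 [z5 [M5 [P5 [S5 <-]]]]] [g6 [z6 [M6 [P6 [S6 <-]]]]].
  destruct (eta_transition g1 g2 L1 L2 d1 M1 S1 M2 P2) as [k1 E2].
  destruct (eta_transition g2 g3 L2 L3 d2 M2 S2 M3 P3) as [k2 E3].
  destruct (eta_transition g3 g4 L3 L4 d3 M3 S3 M4 P4) as [k3 E4].
  destruct (eta_transition g4 g5 L4 L5 d4 M4 S4 M5 P5) as [k4 E5].
  destruct (eta_transition g5 g6 L5 L6 d5 M5 S5 M6 P6) as [k5 E6].
  destruct (eta_transition g6 g1 L6 L1 d6 M6 S6 M1 P1) as [k6 E1].
  set (W := half_hexagon_mx d4 d5 d6); set (B := half_hexagon_mx d1 d2 d3).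
  set (K := k6 * k5 * k4 * k3 * k2 * k1).
  assert (Hloop : smul K (mmul W B) = Id).
  { apply (mmulIr (gm g1)); [exact (mdet g1) |].
    rewrite mmul_1l; symmetry; rewrite E1 at 1; rewrite E6, E5, E4, E3, E2.
    unfold K, W, B, half_hexagon_mx; apply mat_ext; simpl; ring. }
  destruct (scalar_inverse_adj W B K) as [Hsign HB]; [ | exact Hloop | ].
  { unfold W, B; rewrite !det_half_hexagon_mx; reflexivity. }
  exists (- (K * det W)); split.
  - destruct Hsign as [-> | ->]; [right | left];
      apply injective_projections; simpl; lra.
  - exact (half_hexagon_relations d1 d2 d3 d4 d5 d6 _ HB).
Qed.
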